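(* Let $R$ be a ring of the standard form below, and write its elements as $a=(a_1,\dots,a_t)$ with $a_i\in R_i$. Then the normalized homogeneous weight on $R$ is $$\omega(a_1,\dots,a_t)=\begin{cases}1-\prod_{i=1}^t\left(\dfrac{-1}{q_i-1}\right)^{\mathrm{wt}(a_i)},& a\in\mathrm{soc}(R),\\[1ex] 1,& a\notin\mathrm{soc}(R).\end{cases}$$
   Context: Standard form: $R=R_1\times\cdots\times R_t$ with $R_i=R_{i,1}\times\cdots\times R_{i,n_i}$, where each $R_{i,j}$ is a finite local Frobenius ring (local: $\mathrm{rad}(R_{i,j})$, the Jacobson radical, is the unique maximal left ideal; Frobenius: admits a generating character, i.e. a character $\chi$ of the additive group with $r\mapsto(x\mapsto\chi(xr))$ a bijection onto the character group), with $|R_{i,j}/\mathrm{rad}(R_{i,j})|=|\mathrm{soc}(R_{i,j})|=q_i$ for all $j$, and $q_1,\dots,q_t$ distinct. Here $\mathrm{soc}$ denotes the socle; $\mathrm{soc}(R)=\prod_{i,j}\mathrm{soc}(R_{i,j})$. For $a_i=(a_{i,1},\dots,a_{i,n_i})\in R_i$, $\mathrm{wt}(a_i)=|\{j:a_{i,j}\neq0\}|$ is the Hamming weight. The normalized homogeneous weight on a finite Frobenius ring $S$ is the unique $\omega:S\to\mathbb Q$ with $\omega(0)=0$, $\omega(x)=\omega(y)$ whenever $Sx=Sy$, and $\sum_{y\in Sx}\omega(y)=|Sx|$ for all $x\ne0$. *)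

From HB Require Import structures.
From mathcomp Require Import all_boot all_order all_algebra all_field.
Set Implicit Arguments. Unset Strict Implicit. Unset Printing Implicit Defensive.
Import Order.TTheory GRing.Theory Num.Theory.
Local Open Scope ring_scope.

Section DProd.
Variables (K : finType) (F : K -> finPzRingType).

Definition dprod := {dffun forall k : K, F k}.
HB.instance Definition _ := Finite.on dprod.

Definition dp_zero : dprod := [ffun k => 0].
Definition dp_opp (a : dprod) : dprod := [ffun k => - a k].
Definition dp_add (a b : dprod) : dprod := [ffun k => a k + b k].
Definition dp_one : dprod := [ffun k => 1].
Definition dp_mul (a b : dprod) : dprod := [ffun k => a k * b k].

Lemma dp_addA : associative dp_add.
Proof. by move=> a b c; apply/ffunP=> k; rewrite !ffunE addrA. Qed.
Lemma dp_addC : commutative dp_add.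
Proof. by move=> a b; apply/ffunP=> k; rewrite !ffunE addrC. Qed.
Lemma dp_add0 : left_id dp_zero dp_add.
Proof. by move=> a; apply/ffunP=> k; rewrite !ffunE add0r. Qed.
Lemma dp_addN : left_inverse dp_zero dp_opp dp_add.
Proof. by move=> a; apply/ffunP=> k; rewrite !ffunE addNr. Qed.
Lemma dp_mulA : associative dp_mul.
Proof. by move=> a b c; apply/ffunP=> k; rewrite !ffunE mulrA. Qed.
Lemma dp_mul1 : left_id dp_one dp_mul.
Proof. by move=> a; apply/ffunP=> k; rewrite !ffunE mul1r. Qed.
Lemma dp_mulr1 : right_id dp_one dp_mul.
Proof. by move=> a; apply/ffunP=> k; rewrite !ffunE mulr1. Qed.
Lemma dp_mulDl : left_distributive dp_mul dp_add.
Proof. by move=> a b c; apply/ffunP=> k; rewrite !ffunE mulrDl. Qed.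
Lemma dp_mulDr : right_distributive dp_mul dp_add.
Proof. by move=> a b c; apply/ffunP=> k; rewrite !ffunE mulrDr. Qed.

HB.instance Definition _ := GRing.isPzRing.Build dprod
  dp_addA dp_addC dp_add0 dp_addN dp_mulA dp_mul1 dp_mulr1 dp_mulDl dp_mulDr.

Lemma dprod_addE (a b : dprod) k : (a + b) k = a k + b k.
Proof. by rewrite /GRing.add /= ffunE. Qed.
Lemma dprod_mulE (a b : dprod) k : (a * b) k = a k * b k.
Proof. by rewrite /GRing.mul /= ffunE. Qed.
Lemma dprod0E k : (0 : dprod) k = 0.
Proof. by rewrite /GRing.zero /= ffunE. Qed.
End DProd.

Section RingNotions.
Variable S : finPzRingType.

Definition left_ideal (I : {set S}) : bool :=
  [&& (0 : S) \in I,
      [forall x in I, forall y in I, x - y \in I] &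
      [forall r : S, forall x in I, r * x \in I]].

Definition maximal_left_ideal (I : {set S}) : bool :=
  [&& left_ideal I, I != [set: S] &
      [forall J : {set S}, (left_ideal J && (I \proper J)) ==> (J == [set: S])]].

Definition minimal_left_ideal (I : {set S}) : bool :=
  [&& left_ideal I, I != [set 0] &
      [forall J : {set S}, (left_ideal J && (J \proper I)) ==> (J == [set 0])]].

Definition jrad : {set S} := \bigcap_(I | maximal_left_ideal I) I.

(* (left) socle: the sum of all minimal left ideals, i.e. the smallest
   left ideal containing every minimal left ideal *)
Definition socle : {set S} :=
  \bigcap_(I | left_ideal I &&
              [forall M : {set S}, minimal_left_ideal M ==> (M \subset I)]) I.

Definition local_ring : Prop :=
  maximal_left_ideal jrad /\
  forall I : {set S}, maximal_left_ideal I -> I = jrad.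

(* the additive cosets x + J of a subset J: the elements of S/J *)
Definition cosets_of (J : {set S}) : {set {set S}} :=
  [set [set x + j | j in J] | x : S].

Definition residue_card : nat := #|cosets_of jrad|.

Definition add_character (chi : S -> algC) : Prop :=
  chi 0 = 1 /\ forall x y : S, chi (x + y) = chi x * chi y.

Definition generating_character (chi : S -> algC) : Prop :=
  add_character chi /\
  (forall r : S, add_character (fun x => chi (x * r))) /\
  (forall psi : S -> algC, add_character psi ->
     exists! r : S, forall x : S, psi x = chi (x * r)).

Definition frobenius_ring : Prop :=
  exists chi : S -> algC, generating_character chi.

Definition lprinc (x : S) : {set S} := [set s * x | s : S].

Definition normalized_homogeneous_weight (w : S -> rat) : Prop :=
  [/\ w 0 = 0,
      (forall x y : S, lprinc x = lprinc y -> w x = w y) &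
      (forall x : S, x != 0 -> \sum_(y in lprinc x) w y = #|lprinc x|%:R)].
End RingNotions.

(* Standard form  R = prod_i prod_j R_{i,j}                            *)
Definition std_index (t : nat) (n : 'I_t -> nat) : finType :=
  {i : 'I_t & 'I_(n i)}.

Definition std_ring (t : nat) (n : 'I_t -> nat)
    (R : forall i : 'I_t, 'I_(n i) -> finNzRingType) : finPzRingType :=
  dprod (fun k : std_index n => (R (tag k) (tagged k) : finPzRingType)).

Definition block_wt (t : nat) (n : 'I_t -> nat)
    (R : forall i : 'I_t, 'I_(n i) -> finNzRingType)
    (a : std_ring R) (i : 'I_t) : nat :=
  #|[set j : 'I_(n i) | a (Tagged (fun i => 'I_(n i)) j) != 0]|.

From Pilot Require Import Defs.
From HB Require Import structures.
From mathcomp Require Import all_boot all_order all_algebra all_field.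
Set Implicit Arguments. Unset Strict Implicit. Unset Printing Implicit Defensive.
Import Order.TTheory GRing.Theory Num.Theory.
Local Open Scope ring_scope.

(* In a
      local ring ann(m) = rad S, so |M| = |S / rad S|; if moreover
      |soc S| = |S / rad S|, the socle is the unique minimal left ideal and
      lies in every nonzero left ideal.
   3. The normalized homogeneous weight is unique (induction on |S x|).
   4. In a product of such local rings the socle is the product of the socles.
   5. The candidate weight 1 - prod_k c_k^[a_k <> 0] on the socle (1 outside)
      is a normalized homogeneous weight: the sum over S x splits into cosets
      of the socle of a coordinate k0 with x_k0 <> 0, on each of which the
      factor at k0 sums to 1 + (q - 1) c = 0.
   The theorem follows by uniqueness, after regrouping the product over the
   coordinates (i, j) into blocks i. *)
From Pilot Require Import Defs.
From HB Require Import structures.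
From mathcomp Require Import all_boot all_order all_algebra all_field.
Set Implicit Arguments. Unset Strict Implicit. Unset Printing Implicit Defensive.
Import Order.TTheory GRing.Theory Num.Theory.
Local Open Scope ring_scope.

Section LeftIdeals.
Variable S : finPzRingType.
Implicit Types (I J M : {set S}) (x y r : S).

Lemma left_idealP I :
  reflect [/\ 0 \in I, forall x y, x \in I -> y \in I -> x - y \in I &
                 forall r x, x \in I -> r * x \in I] (left_ideal I).
Proof.
apply: (iffP and3P) => [[I0 /forall_inP IB /forallP IM]|[I0 IB IM]]; split => //.
- by move=> x y xI yI; move/forall_inP: (IB x xI); apply.
- by move=> r x xI; move/forall_inP: (IM r); apply.
- by apply/forall_inP=> x xI; apply/forall_inP => y yI; apply: IB.
- by apply/forallP=> r; apply/forall_inP => x xI; apply: IM.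
Qed.

Section Closure.
Variable I : {set S}.
Hypothesis LI : left_ideal I.

Lemma lid0 : 0 \in I.
Proof. by case/left_idealP: LI. Qed.
Lemma lidB x y : x \in I -> y \in I -> x - y \in I.
Proof. by case/left_idealP: LI => _ IB _; apply: IB. Qed.
Lemma lidM r x : x \in I -> r * x \in I.
Proof. by case/left_idealP: LI => _ _ IM; apply: IM. Qed.
Lemma lidN x : x \in I -> - x \in I.
Proof. by move=> xI; rewrite -sub0r lidB // lid0. Qed.
Lemma lidD x y : x \in I -> y \in I -> x + y \in I.
Proof. by move=> xI yI; rewrite -[y]opprK lidB // lidN. Qed.

Lemma lid1_setT : 1 \in I -> I = [set: S].
Proof. by move=> I1; apply/setP=> r; rewrite inE -[r]mulr1 lidM. Qed.

Lemma rmul_ideal m : left_ideal [set j * m | j in I].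
Proof.
apply/left_idealP; split.
- by apply/imsetP; exists 0; rewrite ?lid0 ?mul0r.
- move=> _ _ /imsetP[a aI ->] /imsetP[b bI ->].
  by apply/imsetP; exists (a - b); rewrite ?lidB ?mulrBl.
- move=> r _ /imsetP[a aI ->].
  by apply/imsetP; exists (r * a); rewrite ?lidM ?mulrA.
Qed.
End Closure.

Lemma left_ideal_bigcap (P : pred {set S}) :
  (forall I, P I -> left_ideal I) -> left_ideal (\bigcap_(I | P I) I).
Proof.
move=> LP; apply/left_idealP; split.
- by apply/bigcapP=> I /LP /lid0.
- by move=> x y /bigcapP xP /bigcapP yP; apply/bigcapP=> I PI; rewrite lidB ?LP ?xP ?yP.
- by move=> r x /bigcapP xP; apply/bigcapP=> I PI; rewrite lidM ?LP ?xP.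
Qed.

Lemma left_idealI I J : left_ideal I -> left_ideal J -> left_ideal (I :&: J).
Proof.
move=> LI LJ; apply/left_idealP; split; first by rewrite inE !lid0.
- by move=> x y /setIP[xI xJ] /setIP[yI yJ]; rewrite inE !lidB.
- by move=> r x /setIP[xI xJ]; rewrite inE !lidM.
Qed.

Lemma lprinc_ideal x : left_ideal (lprinc x).
Proof.
have -> : lprinc x = [set s * x | s in [set: S]].
  by apply/setP=> y; apply/imsetP/imsetP => -[s _ ->]; exists s.
by apply/rmul_ideal/left_idealP; split=> // *; rewrite inE.
Qed.

Lemma lprinc_self x : x \in lprinc x.
Proof. by apply/imsetP; exists 1; rewrite ?mul1r. Qed.

Lemma lprinc_min I x : left_ideal I -> x \in I -> lprinc x \subset I.
Proof. by move=> LI xI; apply/subsetP=> _ /imsetP[s _ ->]; apply: lidM. Qed.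

Lemma neq_set0P I : 0 \in I -> reflect (exists2 x, x \in I & x != 0) (I != [set 0]).
Proof.
move=> I0; apply: (iffP idP) => [|[x xI x0]]; last first.
  by apply: contraNneq x0 => I_0; move: xI; rewrite I_0 inE.
rewrite eqEsubset sub1set I0 andbT => /subsetPn[x xI].
by rewrite inE => x0; exists x.
Qed.

Lemma minimalP M :
  reflect [/\ left_ideal M, exists2 m, m \in M & m != 0 &
     forall J x, left_ideal J -> J \subset M -> x \in J -> x != 0 -> J = M]
    (minimal_left_ideal M).
Proof.
apply: (iffP and3P) => [[LM M0 /forallP Mmin]|[LM [m mM m0] Mmin]].
  split=> //; first exact/(neq_set0P (lid0 LM)).
  move=> J x LJ JM xJ x0; apply/eqP; rewrite eqEsubset JM /=.
  apply: contraT => MJ; move/implyP: (Mmin J); rewrite LJ properE JM MJ => /(_ isT) /eqP J0.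
  by move: xJ x0; rewrite J0 inE => ->.
split=> //; first by apply/(neq_set0P (lid0 LM)); exists m.
apply/forallP=> J; apply/implyP=> /andP[LJ ltJM]; have JM := proper_sub ltJM.
apply: contraTT ltJM => /(neq_set0P (lid0 LJ))[x xJ x0].
by rewrite (Mmin J x) ?properxx.
Qed.

Lemma minimal_lprinc M m : minimal_left_ideal M -> m \in M -> m != 0 -> lprinc m = M.
Proof.
case/minimalP=> LM _ Mmin mM m0.
by apply: (Mmin _ m); rewrite ?lprinc_ideal ?lprinc_min ?lprinc_self.
Qed.

Lemma exists_minimal L x : left_ideal L -> x \in L -> x != 0 ->
  exists2 M, minimal_left_ideal M & M \subset L.
Proof.
move=> LL xL x0.
pose P J := [&& left_ideal J, J \subset L & J != [set 0]].
have PL : P L by rewrite /P LL subxx; apply/(neq_set0P (lid0 LL)); exists x.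
case: (arg_minnP (fun J => #|J|) PL) => M /and3P[LM ML /(neq_set0P (lid0 LM)) M0] Mmin.
exists M => //; apply/minimalP; split=> // J y LJ JM yJ y0.
apply/eqP; rewrite eqEcard JM leqNgt /=; apply/negP => ltJM.
have PJ : P J by rewrite /P LJ (subset_trans JM ML); apply/(neq_set0P (lid0 LJ)); exists y.
by move: (Mmin J PJ); rewrite leqNgt ltJM.
Qed.

Lemma socle_ideal : left_ideal (socle S).
Proof. by apply: left_ideal_bigcap => I /andP[]. Qed.

Lemma minimal_sub_socle M : minimal_left_ideal M -> M \subset socle S.
Proof.
move=> minM; apply/bigcapsP=> I /andP[_ /forallP IM].
by move/implyP: (IM M); apply.
Qed.

Lemma socle_least I : left_ideal I ->
  (forall M, minimal_left_ideal M -> M \subset I) -> socle S \subset I.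
Proof.
move=> LI IM; apply: bigcap_inf; rewrite LI /=.
by apply/forallP=> M; apply/implyP/IM.
Qed.

End LeftIdeals.

Lemma card_imset_fibers (T U V : finType) (f : T -> U) (g : T -> V) :
  (forall x y, (f x == f y) = (g x == g y)) ->
  #|[set f x | x : T]| = #|[set g x | x : T]|.
Proof.
move=> fg; pose fgT := [set (f x, g x) | x : T].
have -> : [set f x | x : T] = fst @: fgT by rewrite -imset_comp.
have -> : [set g x | x : T] = snd @: fgT by rewrite -imset_comp.
have fst_inj : {in fgT &, injective fst}.
  move=> _ _ /imsetP[x _ ->] /imsetP[y _ ->] /= fxy.
  by congr pair => //; apply/eqP; rewrite -fg fxy.
have snd_inj : {in fgT &, injective snd}.
  move=> _ _ /imsetP[x _ ->] /imsetP[y _ ->] /= gxy.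
  by congr pair => //; apply/eqP; rewrite fg gxy.
by rewrite (card_in_imset fst_inj) (card_in_imset snd_inj).
Qed.

Section Annihilator.
Variable S : finPzRingType.
Implicit Types (I M : {set S}) (x y m : S).

Lemma coset_eq I x y : left_ideal I ->
  ([set x + j | j in I] == [set y + j | j in I]) = (x - y \in I).
Proof.
move=> LI; apply/eqP/idP => [xy|xyI].
  have : x \in [set y + j | j in I] by rewrite -xy; apply/imsetP; exists 0; rewrite ?lid0 ?addr0.
  by case/imsetP=> j jI ->; rewrite addrC addKr.
have yxI : y - x \in I by rewrite -opprB lidN.
apply/setP=> z; apply/imsetP/imsetP => -[j jI ->].
  by exists (x - y + j); [rewrite lidD | rewrite addrA [y + _]addrC subrK].
by exists (y - x + j); [rewrite lidD | rewrite addrA [x + _]addrC subrK].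
Qed.

Definition lann m : {set S} := [set s | s * m == 0].

Lemma lann_ideal m : left_ideal (lann m).
Proof.
apply/left_idealP; split; first by rewrite inE mul0r.
- by move=> x y; rewrite !inE mulrBl => /eqP-> /eqP->; rewrite subrr.
- by move=> r x; rewrite !inE -mulrA => /eqP->; rewrite mulr0.
Qed.

Lemma card_lprinc m : #|lprinc m| = #|cosets_of (lann m)|.
Proof.
apply: card_imset_fibers => x y.
by rewrite coset_eq ?lann_ideal // inE mulrBl subr_eq0.
Qed.

Lemma minimal_lann_maximal M m : minimal_left_ideal M -> m \in M -> m != 0 ->
  maximal_left_ideal (lann m).
Proof.
move=> minM mM m0; have [LM _ Mmin] := minimalP _ minM.
apply/and3P; split; first exact: lann_ideal.
  by apply: contraNneq m0 => annT; move: (in_setT (1 : S)); rewrite -annT inE mul1r.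
apply/forallP=> J; apply/implyP=> /andP[LJ]; rewrite properE => /andP[annJ].
case/subsetPn=> i iJ; rewrite inE => im0.
have JmM : [set j * m | j in J] = M.
  apply: (Mmin _ (i * m)); rewrite ?rmul_ideal //; last by apply/imsetP; exists i.
  by apply/subsetP=> _ /imsetP[j _ ->]; apply: lidM.
have [j jJ mE] : exists2 j, j \in J & m = j * m by apply/imsetP; rewrite JmM.
have j1 : 1 - j \in lann m by rewrite inE mulrBl mul1r -mE subrr.
by rewrite (lid1_setT LJ) // -(subrK j 1) lidD // (subsetP annJ).
Qed.

End Annihilator.

Section LocalRing.
Variable S : finPzRingType.
Hypothesis Sloc : local_ring S.

Lemma minimal_card (M : {set S}) : minimal_left_ideal M -> #|M| = residue_card S.
Proof.
move=> minM; have [_ [m mM m0] _] := minimalP _ minM.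
rewrite -(minimal_lprinc minM mM m0) card_lprinc /residue_card.
by rewrite (proj2 Sloc _ (minimal_lann_maximal minM mM m0)).
Qed.

Lemma residue_gt1 : (1 < residue_card S)%N.
Proof.
have [/and3P[Lrad radT _] _] := Sloc.
have [x xrad] : exists x, x \notin jrad S.
  by apply/existsP; apply: contraNT radT; rewrite negb_exists => /forallP rad_all;
     rewrite eqEsubset subsetT; apply/subsetP=> x _; apply/negbNE/rad_all.
apply/card_gt1P; exists [set 0 + j | j in jrad S], [set x + j | j in jrad S].
split; [by apply/imsetP; exists 0 | by apply/imsetP; exists x |].
by rewrite coset_eq // sub0r; apply: contra xrad => /(lidN Lrad); rewrite opprK.
Qed.

Hypothesis socle_card : #|socle S| = residue_card S.

(* If the socle has the size of a minimal left ideal, it is the unique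
   minimal left ideal, hence contained in every nonzero left ideal. *)
Lemma socle_sub (L : {set S}) x : left_ideal L -> x \in L -> x != 0 -> socle S \subset L.
Proof.
move=> LL xL x0; have [M minM ML] := exists_minimal LL xL x0.
suff -> : socle S = M by [].
by apply/esym/eqP; rewrite eqEcard minimal_sub_socle // socle_card (minimal_card minM) leqnn.
Qed.

Lemma socle_nz : exists2 s, s \in socle S & s != 0.
Proof.
have := residue_gt1; rewrite -socle_card => /card_gt1P[x [y [xS yS xy]]].
by have [x0|] := eqVneq x 0; [exists y; rewrite // -x0 eq_sym | exists x].
Qed.

End LocalRing.

Section WeightUniqueness.
Variable S : finPzRingType.
Implicit Types (w : S -> rat) (x : S).

Definition associates x : {set S} := [set y in lprinc x | lprinc y == lprinc x].

Lemma sum_lprinc_split w x :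
  (forall x y, lprinc x = lprinc y -> w x = w y) ->
  \sum_(y in lprinc x) w y =
    w x *+ #|associates x| + \sum_(y in lprinc x | lprinc y != lprinc x) w y.
Proof.
move=> w_assoc; rewrite (bigID (fun y => lprinc y == lprinc x)) /=; congr (_ + _).
rewrite -sumr_const; apply: eq_big => [y|y /andP[_ /eqP /w_assoc //]].
by rewrite inE.
Qed.

(* The normalized homogeneous weight is unique: the defining sums determine
   w on x from its values on generators of proper subideals of S x. *)
Lemma nhw_unique w1 w2 :
  normalized_homogeneous_weight w1 -> normalized_homogeneous_weight w2 -> w1 =1 w2.
Proof.
move=> [w1_0 w1_assoc w1_sum] [w2_0 w2_assoc w2_sum] x.
have [N] := ubnP #|lprinc x|; elim: N x => // N IH x ltxN.
have [->|x0] := eqVneq x 0; first by rewrite w1_0 w2_0.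
have smaller : \sum_(y in lprinc x | lprinc y != lprinc x) w1 y =
               \sum_(y in lprinc x | lprinc y != lprinc x) w2 y.
  apply: eq_bigr => y /andP[yx yNx]; apply: IH; rewrite -ltnS.
  apply: leq_trans ltxN; rewrite ltnS proper_card //.
  by rewrite properEneq yNx lprinc_min ?lprinc_ideal.
have assoc_nz : #|associates x| != 0%N.
  by rewrite -lt0n; apply/card_gt0P; exists x; rewrite !inE lprinc_self eqxx.
have := w1_sum x x0; rewrite -(w2_sum x x0) !sum_lprinc_split // smaller.
by move=> /addIr /eqP; rewrite eqrMn2r (negbTE assoc_nz) => /eqP.
Qed.

Lemma nhwP w0 w : normalized_homogeneous_weight w0 ->
  normalized_homogeneous_weight w <-> w =1 w0.
Proof.
move=> w0_nhw; split=> [w_nhw|ww0]; first exact: nhw_unique.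
have [w0_0 w0_assoc w0_sum] := w0_nhw; split; first by rewrite ww0.
  by move=> x y xy; rewrite !ww0; apply: w0_assoc.
by move=> x x0; rewrite -(w0_sum x x0); apply: eq_bigr => y _.
Qed.

End WeightUniqueness.

Section DProdComponents.
Variables (K : finType) (F : K -> finPzRingType).
Local Notation T := (dprod F).
Implicit Types (a b : T) (k : K).

Lemma dprodNE a k : (- a) k = - a k.
Proof. by rewrite /GRing.opp /= ffunE. Qed.

Lemma dprodBE a b k : (a - b) k = a k - b k.
Proof. by rewrite dprod_addE dprodNE. Qed.

Lemma dprod_sumE (I : finType) (P : pred I) (G : I -> T) k :
  (\sum_(i | P i) G i) k = \sum_(i | P i) G i k.
Proof. by elim/big_rec2: _ => [|i y1 y2 _ <-]; rewrite ?dprod0E ?dprod_addE. Qed.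

Definition single k0 (z : F k0) : T :=
  [ffun k => match k0 =P k with
             | ReflectT e => eq_rect k0 (fun k => (F k : Type)) z k e
             | ReflectF _ => 0 end].

Lemma single_at k0 (z : F k0) : single z k0 = z.
Proof. by rewrite ffunE; case: eqP => // e; rewrite (eq_irrelevance e erefl). Qed.

Lemma single_off k0 (z : F k0) k : k0 != k -> single z k = 0.
Proof. by move=> k0k; rewrite ffunE; case: eqP => // e; rewrite e eqxx in k0k. Qed.

Lemma single_ext k0 (a b : T) : a k0 = b k0 -> (forall k, k0 != k -> a k = b k) -> a = b.
Proof. by move=> ab0 ab; apply/ffunP=> k; case: (eqVneq k0 k) => [<-|/ab]. Qed.

Lemma single0 k0 : single (0 : F k0) = 0.
Proof. by apply: (single_ext (k0 := k0)) => [|k /single_off->]; rewrite ?single_at dprod0E. Qed.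

Lemma singleB k0 (z1 z2 : F k0) : single z1 - single z2 = single (z1 - z2).
Proof.
apply: (single_ext (k0 := k0)) => [|k k0k]; rewrite dprodBE ?single_at //.
by rewrite !single_off ?subr0.
Qed.

Lemma singleMl k0 (r : T) (z : F k0) : r * single z = single (r k0 * z).
Proof.
apply: (single_ext (k0 := k0)) => [|k k0k]; rewrite dprod_mulE ?single_at //.
by rewrite !single_off ?mulr0.
Qed.

Lemma singleMr k0 (r : F k0) (a : T) : single r * a = single (r * a k0).
Proof.
apply: (single_ext (k0 := k0)) => [|k k0k]; rewrite dprod_mulE ?single_at //.
by rewrite !single_off ?mul0r.
Qed.

Lemma single_eq0 k0 (z : F k0) : (single z == 0) = (z == 0).
Proof. by apply/eqP/eqP => [sz0|->]; rewrite ?single0 // -(single_at z) sz0 dprod0E. Qed.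

Lemma dprod_neq0 a : a != 0 -> exists k, a k != 0.
Proof.
move=> a0; apply/existsP; apply: contraNT a0; rewrite negb_exists => /forallP a_0.
by apply/eqP/ffunP=> k; rewrite dprod0E; apply/eqP/negbNE/a_0.
Qed.

Lemma dprod_decomp a : a = \sum_k single (a k).
Proof.
apply/ffunP=> k; rewrite dprod_sumE (bigD1 k) //= single_at big1 ?addr0 //.
by move=> k' k'k; rewrite single_off.
Qed.

Lemma proj_ideal (J : {set T}) k : left_ideal J -> left_ideal [set j k | j : T in J].
Proof.
move=> LJ; apply/left_idealP; split.
- by apply/imsetP; exists 0; rewrite ?lid0 ?dprod0E.
- move=> _ _ /imsetP[a aJ ->] /imsetP[b bJ ->].
  by apply/imsetP; exists (a - b); rewrite ?lidB ?dprodBE.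
- move=> r _ /imsetP[a aJ ->].
  by apply/imsetP; exists (single r * a); rewrite ?lidM // dprod_mulE single_at.
Qed.

Lemma preimage_ideal k (I : {set F k}) : left_ideal I -> left_ideal [set a : T | a k \in I].
Proof.
move=> LI; apply/left_idealP; split; first by rewrite inE dprod0E lid0.
- by move=> a b; rewrite !inE dprodBE; apply: lidB.
- by move=> r a; rewrite !inE dprod_mulE; apply: lidM.
Qed.

Lemma single_ideal k (I : {set F k}) : left_ideal I -> left_ideal [set single z | z in I].
Proof.
move=> LI; apply/left_idealP; split.
- by apply/imsetP; exists 0; rewrite ?lid0 ?single0.
- move=> _ _ /imsetP[z1 z1I ->] /imsetP[z2 z2I ->].
  by apply/imsetP; exists (z1 - z2); rewrite ?lidB ?singleB.
- move=> r _ /imsetP[z zI ->].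
  by apply/imsetP; exists (r k * z); rewrite ?lidM ?singleMl.
Qed.

End DProdComponents.

Section DProdSocle.
Variables (K : finType) (F : K -> finPzRingType).
Local Notation T := (dprod F).
Hypothesis F_local : forall k, local_ring (F k).
Hypothesis socle_card : forall k, #|socle (F k)| = residue_card (F k).

Definition socle_prod : {set T} := [set a : T | [forall k, a k \in socle (F k)]].

Lemma socle_prod_ideal : left_ideal socle_prod.
Proof.
apply/left_idealP; split.
  by rewrite inE; apply/forallP=> k; rewrite dprod0E lid0 ?socle_ideal.
- move=> a b; rewrite !inE => /forallP aS /forallP bS; apply/forallP=> k.
  by rewrite dprodBE lidB ?socle_ideal.
- move=> r a; rewrite !inE => /forallP aS; apply/forallP=> k.
  by rewrite dprod_mulE lidM ?socle_ideal.
Qed.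

(* Every component of an element of a minimal left ideal M lies in the socle:
   if m k != 0, the projection of M contains the socle of F k, so the elements
   of M with k-th component in the socle form a nonzero subideal of M. *)
Lemma minimal_sub_socle_prod (M : {set T}) : minimal_left_ideal M -> M \subset socle_prod.
Proof.
move=> minM; have [LM _ Mmin] := minimalP _ minM.
apply/subsetP=> m mM; rewrite inE; apply/forallP=> k.
have [->|mk0] := eqVneq (m k) 0; first by rewrite lid0 ?socle_ideal.
have [s sS s0] := socle_nz (F_local k) (socle_card k).
have mkMk : m k \in [set j k | j : T in M] by apply/imsetP; exists m.
have socle_Mk := socle_sub (F_local k) (socle_card k) (proj_ideal k LM) mkMk mk0.
have /imsetP[m' m'M sE] := subsetP socle_Mk s sS.
pose Mk := M :&: [set a : T | a k \in socle (F k)].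
have MkM : Mk = M.
  apply: (Mmin _ m'); rewrite ?left_idealI ?preimage_ideal ?socle_ideal ?subsetIl //.
    by rewrite !inE m'M -sE.
  by apply: contraNneq s0 => m'0; rewrite sE m'0 dprod0E.
by move: mM; rewrite -MkM !inE => /andP[].
Qed.

Lemma single_socle_minimal k : minimal_left_ideal [set single z | z in socle (F k)].
Proof.
have [s sS s0] := socle_nz (F_local k) (socle_card k).
apply/minimalP; split; first exact/single_ideal/socle_ideal.
  by exists (single s); [apply/imsetP; exists s | rewrite single_eq0].
move=> J x LJ JS xJ x0; have /imsetP[z zS xE] := subsetP JS x xJ.
have zJk : z \in [set j k | j : T in J] by apply/imsetP; exists x => //; rewrite xE single_at.
have z0 : z != 0 by rewrite -single_eq0 -xE.
have SJk := socle_sub (F_local k) (socle_card k) (proj_ideal k LJ) zJk z0.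
apply/eqP; rewrite eqEsubset JS /=; apply/subsetP=> _ /imsetP[s' s'S ->].
have /imsetP[j jJ s'E] := subsetP SJk s' s'S.
have /imsetP[s'' _ jE] := subsetP JS j jJ.
by rewrite s'E jE single_at -jE.
Qed.

Lemma single_in_socle k (z : F k) : z \in socle (F k) -> single z \in socle T.
Proof.
move=> zS; apply: (subsetP (minimal_sub_socle (single_socle_minimal k))).
by rewrite imset_f.
Qed.

Lemma socle_dprod : socle T = socle_prod.
Proof.
apply/eqP; rewrite eqEsubset socle_least ?socle_prod_ideal //=; last first.
  exact: minimal_sub_socle_prod.
apply/subsetP=> a; rewrite inE => /forallP aS; rewrite (dprod_decomp a).
apply: (big_ind (fun b => b \in socle T)).
- exact: lid0 (socle_ideal T).
- exact: lidD (socle_ideal T).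
- by move=> k _; apply/single_in_socle/aS.
Qed.

End DProdSocle.

Section DProdWeight.
Variables (K : finType) (F : K -> finPzRingType).
Local Notation T := (dprod F).
Hypothesis F_local : forall k, local_ring (F k).
Hypothesis socle_card : forall k, #|socle (F k)| = residue_card (F k).

Definition coord_factor k (z : F k) : rat :=
  if z != 0 then - 1 / (#|socle (F k)|%:R - 1) else 1.

Definition support_prod (a : T) : rat := \prod_k coord_factor (a k).

Definition socle_weight (a : T) : rat :=
  if a \in socle T then 1 - support_prod a else 1.

(* Summing the coordinate factor over the socle of F k gives
   1 + (q_k - 1) * (-1 / (q_k - 1)) = 0. *)
Lemma sum_coord_factor k : \sum_(z in socle (F k)) coord_factor z = 0.
Proof.
have q_gt1 : (1 < #|socle (F k)|)%N by rewrite socle_card residue_gt1.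
have q1_nz : (#|socle (F k)|%:R - 1 : rat) != 0 by rewrite subr_eq0 pnatr_eq1 gtn_eqF.
rewrite (bigD1 0) ?lid0 ?socle_ideal //= /coord_factor eqxx /=.
rewrite (eq_bigr (fun _ => - 1 / (#|socle (F k)|%:R - 1))); last by move=> z /andP[_ ->].
rewrite sumr_const.
have -> : #|(fun z : F k => (z \in socle (F k)) && (z != 0))| = (#|socle (F k)| - 1)%N.
  rewrite [in RHS](cardD1 0) lid0 ?socle_ideal // add1n subn1 /=.
  by apply: eq_card => z; rewrite !inE andbC.
rewrite -[X in 1 + X]mulr_natr natrB ?(ltnW q_gt1) //.
by rewrite mulrC mulrA mulrN1 mulNr divff // addrN.
Qed.

Lemma support_prod_shift k0 (b : T) (z : F k0) : b k0 = 0 ->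
  support_prod (b + single z) = coord_factor z * support_prod b.
Proof.
move=> bk0; rewrite /support_prod (bigD1 k0) //= [in RHS](bigD1 k0) //=.
rewrite dprod_addE single_at bk0 add0r [coord_factor 0]/coord_factor eqxx mul1r.
congr (_ * _); apply: eq_bigr => k kk0.
by rewrite dprod_addE single_off 1?eq_sym // addr0.
Qed.

(* Let A be a left ideal whose k0-th coordinates lie in the socle of F k0 and
   which contains that socle placed at k0. Then A is a union of cosets of this
   socle, and on each coset the coordinate factor at k0 sums to zero. *)
Lemma sum_support_prod_eq0 (A : {set T}) k0 : left_ideal A ->
  (forall a, a \in A -> a k0 \in socle (F k0)) ->
  (forall z, z \in socle (F k0) -> single z \in A) ->
  \sum_(a in A) support_prod a = 0.
Proof.
move=> LA A_k0 A_single; pose base (a : T) := a - single (a k0).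
rewrite (partition_big base (fun b => (b \in A) && (b k0 == 0))) /=; last first.
  by move=> a aA; rewrite lidB ?A_single ?A_k0 // dprodBE single_at subrr eqxx.
apply: big1 => b /andP[bA /eqP bk0].
have fibre a : (a \in A) && (base a == b) =
                (a \in [set b + single z | z in socle (F k0)]).
  apply/andP/imsetP => [[aA /eqP <-]|[z zS ->]].
    by exists (a k0); rewrite ?A_k0 // subrK.
  by rewrite lidD ?A_single // /base dprod_addE single_at bk0 add0r addrK.
rewrite (eq_bigl _ _ fibre) big_imset /=; last first.
  by move=> z1 z2 _ _ /addrI /(congr1 (fun a : T => a k0)); rewrite !single_at.
rewrite (eq_bigr (fun z => coord_factor z * support_prod b)); last first.
  by move=> z _; rewrite support_prod_shift.
by rewrite -mulr_suml sum_coord_factor mul0r.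
Qed.

Lemma lprinc_support (x y : T) : y \in lprinc x ->
  (x \in socle T -> y \in socle T) /\ (forall k, x k = 0 -> y k = 0).
Proof.
case/imsetP=> s _ ->; split; first by move=> xS; rewrite lidM ?socle_ideal.
by move=> k xk0; rewrite dprod_mulE xk0 mulr0.
Qed.

Lemma socle_weight_assoc (x y : T) : lprinc x = lprinc y -> socle_weight x = socle_weight y.
Proof.
move=> xy; have y_x : y \in lprinc x by rewrite xy lprinc_self.
have x_y : x \in lprinc y by rewrite -xy lprinc_self.
have [[xsy xy0] [ysx yx0]] := (lprinc_support y_x, lprinc_support x_y).
rewrite /socle_weight /support_prod (_ : (y \in socle T) = (x \in socle T)); last first.
  by apply/idP/idP.
congr (if _ then 1 - _ else _); apply: eq_bigr => k _.
have same_supp : (y k == 0) = (x k == 0) by apply/eqP/eqP => [/yx0|/xy0].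
by rewrite /coord_factor same_supp.
Qed.

(* For x <> 0 with x k0 <> 0, the socle of F k0 lies in F k0 x_k0, so
   S x :&: soc is a left ideal as in [sum_support_prod_eq0]. *)
Lemma socle_weight_sum (x : T) : x != 0 ->
  \sum_(y in lprinc x) socle_weight y = #|lprinc x|%:R.
Proof.
move=> x0; have [k0 xk0] := dprod_neq0 x0; pose A := lprinc x :&: socle T.
have sumA : \sum_(a in A) support_prod a = 0.
  apply: (sum_support_prod_eq0 (k0 := k0)).
  - by rewrite left_idealI ?lprinc_ideal ?socle_ideal.
  - by move=> a /setIP[_]; rewrite socle_dprod // inE => /forallP.
  move=> z zS; have := subsetP (socle_sub (F_local k0) (socle_card k0)
    (lprinc_ideal (x k0)) (lprinc_self (x k0)) xk0) z zS.
  case/imsetP=> r _ zE; rewrite inE single_in_socle // andbT.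
  by apply/imsetP; exists (single r); rewrite ?singleMr ?zE.
have -> : \sum_(y in lprinc x) socle_weight y =
          \sum_(y in lprinc x) (1 - if y \in socle T then support_prod y else 0).
  by apply: eq_bigr => y _; rewrite /socle_weight; case: ifP; rewrite ?subr0.
rewrite sumrB sumr_const -big_mkcondr /= (eq_bigl (fun a => a \in A)) ?sumA ?subr0 //.
by move=> a; rewrite inE.
Qed.

Lemma socle_weight_nhw : normalized_homogeneous_weight socle_weight.
Proof.
split; [|exact: socle_weight_assoc | exact: socle_weight_sum].
rewrite /socle_weight lid0 ?socle_ideal // /support_prod big1 ?subrr // => k _.
by rewrite dprod0E /coord_factor eqxx.
Qed.

End DProdWeight.

Lemma prod_block_wt (t : nat) (n : 'I_t -> nat)
    (R : forall i : 'I_t, 'I_(n i) -> finNzRingType) (c : 'I_t -> rat) (a : std_ring R) :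
  \prod_(i < t) c i ^+ block_wt a i =
  \prod_(k : std_index n) (if a k != 0 then c (tag k) else 1).
Proof.
rewrite (eq_bigr (fun i => \prod_(j < n i)
    (if a (Tagged (fun i => 'I_(n i)) j) != 0 then c i else 1))); last first.
  by move=> i _; rewrite /block_wt -prodr_const big_mkcond; apply: eq_bigr => j _; rewrite inE.
by rewrite sig_big_dep /=; apply: eq_bigr => -[i j] _.
Qed.

(* The ring is the product of the local rings R_ij; by uniqueness it suffices
   that the candidate weight is the normalized homogeneous weight. *)
Theorem theorem3p9 (t : nat) (n : 'I_t -> nat)
    (R : forall i : 'I_t, 'I_(n i) -> finNzRingType) (q : 'I_t -> nat) :
  (forall i : 'I_t, (0 < n i)%N) ->
  (forall (i : 'I_t) (j : 'I_(n i)), local_ring (R i j)) ->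
  (forall (i : 'I_t) (j : 'I_(n i)), frobenius_ring (R i j)) ->
  (forall (i : 'I_t) (j : 'I_(n i)), residue_card (R i j) = q i) ->
  (forall (i : 'I_t) (j : 'I_(n i)), #|socle (R i j)| = q i) ->
  injective q ->
  forall w : std_ring R -> rat,
    normalized_homogeneous_weight w <->
    (forall a : std_ring R,
       w a = if a \in socle (std_ring R)
             then 1 - \prod_(i < t) (- 1 / ((q i)%:R - 1)) ^+ block_wt a i
             else 1).
Proof.
move=> _ R_local _ R_residue R_socle _ w.
pose F (k : std_index n) : finPzRingType := R (tag k) (tagged k).
have F_local k : local_ring (F k) by apply: R_local.
have F_socle k : #|socle (F k)| = residue_card (F k) by rewrite R_socle R_residue.
have weightE a : socle_weight (F := F) a = if a \in socle (std_ring R)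
    then 1 - \prod_(i < t) (- 1 / ((q i)%:R - 1)) ^+ block_wt a i else 1.
  rewrite prod_block_wt /socle_weight /support_prod /coord_factor.
  by under eq_bigr do rewrite R_socle.
apply: iff_trans (nhwP w (socle_weight_nhw F_local F_socle)) _.
by split=> w_eq a; rewrite w_eq weightE.
Qed.
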